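(* Let $T_{skewcw,2}=\sum_{\sigma\in S_3}\operatorname{sgn}(\sigma)\, e_{\sigma(1)}\otimes e_{\sigma(2)}\otimes e_{\sigma(3)}\in \Lambda^3\mathbb{C}^3\subset\mathbb{C}^3\otimes\mathbb{C}^3\otimes\mathbb{C}^3$ (where $e_1,e_2,e_3$ is a basis of $\mathbb{C}^3$), and let $W=a_1\otimes b_1\otimes c_2+a_1\otimes b_2\otimes c_1+a_2\otimes b_1\otimes c_1\in\mathbb{C}^2\otimes\mathbb{C}^2\otimes\mathbb{C}^2$ (with $\{a_i\},\{b_j\},\{c_k\}$ bases of the three copies of $\mathbb{C}^2$). Then the Kronecker product $T_{skewcw,2}\boxtimes W\in\mathbb{C}^6\otimes\mathbb{C}^6\otimes\mathbb{C}^6$ has border rank nine.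
   Context: The border rank of a tensor is the smallest $s$ such that it is a limit of tensors that are sums of $s$ tensors of the form $a\otimes b\otimes c$. For $T\in A\otimes B\otimes C$ and $T'\in A'\otimes B'\otimes C'$, the Kronecker product $T\boxtimes T'$ is $T\otimes T'$ regarded as an element of $(A\otimes A')\otimes(B\otimes B')\otimes(C\otimes C')$. *)

(* Complex numbers are R[i] (mathcomp-real-closed) for
   an arbitrary R : realType (complete archimedean field, i.e. a copy of the reals). *)
From mathcomp Require Import all_boot all_order all_algebra all_fingroup.
From mathcomp Require Import reals.
From mathcomp.real_closed Require Import complex.
Set Implicit Arguments. Unset Strict Implicit. Unset Printing Implicit Defensive.
Import Order.TTheory GRing.Theory Num.Theory.
Local Open Scope ring_scope.

Section Tensors.
Variable C : numClosedFieldType.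

Definition tensor3 (I J K : finType) := I -> J -> K -> C.

Definition simple_tensor (I J K : finType) (a : I -> C) (b : J -> C) (c : K -> C)
  : tensor3 I J K := fun i j k => a i * b j * c k.

Definition basis_vec (I : finType) (x : I) : I -> C := fun i => (i == x)%:R.

Definition rank_le (I J K : finType) (T : tensor3 I J K) (s : nat) : Prop :=
  exists (a : 'I_s -> I -> C) (b : 'I_s -> J -> C) (c : 'I_s -> K -> C),
    forall i j k, T i j k = \sum_(l < s) simple_tensor (a l) (b l) (c l) i j k.

(* coordinatewise (equivalently, in any norm) convergence of a sequence of tensors *)
Definition tensor_cvg (I J K : finType) (u : nat -> tensor3 I J K) (T : tensor3 I J K)
  : Prop :=
  forall e : C, 0 < e -> exists N : nat, forall n, (N <= n)%N ->
    forall i j k, `|u n i j k - T i j k| < e.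

Definition border_rank_le (I J K : finType) (T : tensor3 I J K) (s : nat) : Prop :=
  exists u : nat -> tensor3 I J K, (forall n, rank_le (u n) s) /\ tensor_cvg u T.

Definition has_border_rank (I J K : finType) (T : tensor3 I J K) (s : nat) : Prop :=
  border_rank_le T s /\ forall s', border_rank_le T s' -> (s <= s')%N.

(* Kronecker product: T (x) T' regarded in (A(x)A') (x) (B(x)B') (x) (C(x)C'),
   the bases of A(x)A' etc. being the product bases indexed by pairs *)
Definition kron (I J K I' J' K' : finType) (T : tensor3 I J K) (T' : tensor3 I' J' K')
  : tensor3 (I * I')%type (J * J')%type (K * K')%type :=
  fun i j k => T i.1 j.1 k.1 * T' i.2 j.2 k.2.

Definition T_skewcw2 : tensor3 'I_3 'I_3 'I_3 :=
  fun i j k => \sum_(s : 'S_3) (-1) ^+ s *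
    simple_tensor (basis_vec (s (inord 0))) (basis_vec (s (inord 1)))
                  (basis_vec (s (inord 2))) i j k.

(* W = a1 b1 c2 + a1 b2 c1 + a2 b1 c1  (index 0 = subscript 1, index 1 = subscript 2) *)
Definition W_tensor : tensor3 'I_2 'I_2 'I_2 :=
  fun i j k =>
    simple_tensor (basis_vec (inord 0)) (basis_vec (inord 0)) (basis_vec (inord 1)) i j k
  + simple_tensor (basis_vec (inord 0)) (basis_vec (inord 1)) (basis_vec (inord 0)) i j k
  + simple_tensor (basis_vec (inord 1)) (basis_vec (inord 0)) (basis_vec (inord 0)) i j k.

End Tensors.

(* Let G_m = sum_l lam_l^m a_l (x) b_l (x) c_l.  If G_0 = 0 and G_1 = T, then
   the rank-s tensors
     sum_l t^-1 (a_l (x) (1, t lam_l)) (x) (b_l (x) (1, t lam_l)) (x) (c_l (x) (1, t lam_l))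
   have entry t^(e1+e2+e3-1) G_(e1+e2+e3) at exponents (e1, e2, e3); as t -> 0 only the terms
   with e1 + e2 + e3 = 1 survive, and these are exactly T (x) W.  A nine-term decomposition of
   T_skewcw2 with these two moments gives border rank <= 9.

   Restrict the first factor C^3 (x) C^2 to C^3 (x) a_1.  The Koszul flattening of
   the restricted tensor is an invertible 18 x 18 matrix, while on a rank-one tensor it has rank
   at most 2, being a product through a skew-symmetric 3 x 3 matrix.  Invertibility survives
   small perturbations, so a rank-s approximation close enough to the limit gives 18 <= 2 s. *)

From mathcomp Require Import all_boot all_order all_algebra all_fingroup.
From mathcomp Require Import reals ring zify.
From mathcomp.real_closed Require Import complex.
Set Implicit Arguments. Unset Strict Implicit. Unset Printing Implicit Defensive.
Import Order.TTheory GRing.Theory Num.Theory.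
Local Open Scope ring_scope.

Definition levi (i j k : 'I_3) : int :=
  match nat_of_ord i, nat_of_ord j, nat_of_ord k with
  | 0, 1, 2 | 1, 2, 0 | 2, 0, 1 => 1%:Z
  | 0, 2, 1 | 2, 1, 0 | 1, 0, 2 => - 1%:Z
  | _, _, _ => 0
  end.

Lemma levi_swap23 (i j k : 'I_3) : levi i k j = - levi i j k.
Proof. by case: i j k => [[|[|[|//]]] ?] [[|[|[|//]]] ?] [[|[|[|//]]] ?]. Qed.

Lemma levi_contract (j k p q : 'I_3) :
  \sum_(i < 3) levi i j k * levi i p q =
  ((j == p) && (k == q))%:R - ((j == q) && (k == p))%:R.
Proof.
case: j k p q => [[|[|[|//]]] ?] [[|[|[|//]]] ?] [[|[|[|//]]] ?] [[|[|[|//]]] ?];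
  by rewrite !big_ord_recr big_ord0.
Qed.

Lemma levi_norm_le1 (R : numDomainType) (i j k : 'I_3) : `|(levi i j k)%:~R : R| <= 1.
Proof.
by case: i j k => [[|[|[|//]]] ?] [[|[|[|//]]] ?] [[|[|[|//]]] ?];
  rewrite /levi /= ?normrN ?normr1 ?normr0.
Qed.

Local Notation i0 := (inord 0 : 'I_3).
Local Notation i1 := (inord 1 : 'I_3).
Local Notation i2 := (inord 2 : 'I_3).

Lemma ord3P (x : 'I_3) : [\/ x = i0, x = i1 | x = i2].
Proof.
by case: x => [[|[|[|//]]] ?]; [apply: Or31 | apply: Or32 | apply: Or33];
  apply: val_inj; rewrite /= inordK.
Qed.

Lemma alternating3E (R : numDomainType) (f : 'I_3 -> 'I_3 -> 'I_3 -> R) :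
    (forall i j k, f j i k = - f i j k) -> (forall i j k, f i k j = - f i j k) ->
  forall i j k, f i j k = (levi i j k)%:~R * f i0 i1 i2.
Proof.
move=> f12 f23.
have f13 i j k : f k j i = - f i j k by rewrite f12 f23 f12 opprK.
have [zl zr zm] : [/\ forall i k, f i i k = 0, forall i j, f i j j = 0
                    & forall i j, f i j i = 0].
  split=> [i k|i j|i j]; apply/eqP;
    by rewrite -eqNr -?(f12 i i k) -?(f23 i j j) -?(f13 i j i).
move=> i j k; case: (ord3P i) (ord3P j) (ord3P k) => -> [] -> [] ->;
  by rewrite ?zl ?zr ?zm ?(f12 i2 i1 i0) ?(f12 i0 i2 i1) ?(f12 i0 i1 i2)
    ?(f23 i0 i1 i2) ?(f13 i0 i1 i2) /levi !inordK //= ?opprK ?mul0r ?mul1r ?mulN1r.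
Qed.

Lemma sum_sign_perm_tperm (R : pzRingType) n (x y : 'I_n) (F : 'S_n -> R) : x != y ->
  \sum_(s : 'S_n) (-1) ^+ s * F s = - \sum_(s : 'S_n) (-1) ^+ s * F (tperm x y * s)%g.
Proof.
move=> xy; rewrite -sumrN (reindex_inj (mulgI (tperm x y))) /=.
by apply: eq_bigr => s _; rewrite odd_permM odd_tperm xy signrN mulNr.
Qed.

Section SkewTensor.
Variable C : numClosedFieldType.

Let skewE i j k : T_skewcw2 C i j k =
  \sum_(s : 'S_3) (-1) ^+ s * ((i == s i0)%:R * (j == s i1)%:R * (k == s i2)%:R).
Proof. by []. Qed.

Let ord3_neq (m n : nat) :
  (m < 3)%N -> (n < 3)%N -> m != n -> (inord m : 'I_3) != inord n.
Proof. by move=> ? ? ?; rewrite -val_eqE /= !inordK. Qed.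

Lemma T_skewcw2_swap12 i j k : T_skewcw2 C j i k = - T_skewcw2 C i j k.
Proof.
rewrite !skewE (@sum_sign_perm_tperm _ _ i0 i1) ?ord3_neq //; congr (- _).
apply: eq_bigr => s _; rewrite !permM tpermL tpermR tpermD ?ord3_neq //.
by rewrite [_ * (i == _)%:R]mulrC.
Qed.

Lemma T_skewcw2_swap23 i j k : T_skewcw2 C i k j = - T_skewcw2 C i j k.
Proof.
rewrite !skewE (@sum_sign_perm_tperm _ _ i1 i2) ?ord3_neq //; congr (- _).
apply: eq_bigr => s _; rewrite !permM tpermL tpermR tpermD ?ord3_neq //.
by rewrite -!mulrA [(k == _)%:R * _]mulrC.
Qed.

Lemma T_skewcw2_id : T_skewcw2 C i0 i1 i2 = 1.
Proof.
rewrite skewE (bigD1 1%g) //= big1 ?addr0; first by rewrite odd_perm1 !perm1 !eqxx !mulr1.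
move=> s s_neq1.
case: (i0 =P s i0) => [e0|]; last by rewrite !(mul0r, mulr0).
case: (i1 =P s i1) => [e1|]; last by rewrite !(mul0r, mulr0).
case: (i2 =P s i2) => [e2|]; last by rewrite !(mul0r, mulr0).
case/eqP: s_neq1; apply/permP => x; rewrite perm1.
by case: (ord3P x) => ->; rewrite -?e0 -?e1 -?e2.
Qed.

Lemma T_skewcw2E i j k : T_skewcw2 C i j k = (levi i j k)%:~R.
Proof.
by rewrite (alternating3E T_skewcw2_swap12 T_skewcw2_swap23) T_skewcw2_id mulr1.
Qed.
End SkewTensor.

Lemma W_tensorE (C : numClosedFieldType) (i j k : 'I_2) :
  W_tensor C i j k = (i + j + k == 1)%N%:R.
Proof.
case: i j k => [[|[|//]] ?] [[|[|//]] ?] [[|[|//]] ?];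
  rewrite /W_tensor /simple_tensor /basis_vec -!val_eqE /= !inordK //=;
  by rewrite !(mulr0, mul0r, mulr1, addr0, add0r).
Qed.

Lemma ler_sum_term (R : numDomainType) (T : finType) (F : T -> R) x :
  (forall y, 0 <= F y) -> F x <= \sum_y F y.
Proof. by move=> F_ge0; rewrite (bigD1 x) //= lerDl sumr_ge0. Qed.

Lemma sum_prod3 (R : nmodType) (I J K : finType) (F : I -> J -> K -> R) :
  \sum_(z : I * (J * K)) F z.1 z.2.1 z.2.2 = \sum_i \sum_j \sum_k F i j k.
Proof.
rewrite -(pair_bigA _ (fun i (w : J * K) => F i w.1 w.2)).
by apply: eq_bigr => i _; rewrite -pair_bigA.
Qed.

Lemma mxrank_sum_le (F : fieldType) m n s (A : 'I_s -> 'M[F]_(m, n)) :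
  (\rank (\sum_(l < s) A l)%R <= \sum_(l < s) \rank (A l))%N.
Proof.
apply: (big_ind2 (fun M r => \rank M <= r)%N) => [|M1 r1 M2 r2 le1 le2|//].
  by rewrite mxrank0.
exact: leq_trans (mxrank_add _ _) (leq_add le1 le2).
Qed.

Lemma skew_mxrank_lt (F : fieldType) n (M : 'M[F]_n) :
  odd n -> 2%:R != 0 :> F -> M^T = - M -> (\rank M < n)%N.
Proof.
move=> n_odd two_neq0 skewM.
have detM0 : \det M = 0.
  have : \det M *+ 2 = 0.
    by rewrite mulr2n -{1}det_tr skewM -scaleN1r detZ -signr_odd n_odd mulN1r addNr.
  by move/eqP; rewrite -mulr_natr mulf_eq0 (negbTE two_neq0) orbF => /eqP.
rewrite ltn_neqAle rank_leq_row andbT.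
by rewrite -[_ == _]/(row_free M) row_free_unit unitmxE detM0 unitr0.
Qed.

Section Perturbation.
Variables (R : numFieldType) (n : nat).

Lemma unitmx_1D (E : 'M[R]_n) (d : R) :
  (forall i j, `|E i j| <= d) -> n%:R * d < 1 -> 1%:M + E \in unitmx.
Proof.
move=> Ed nd_lt1; rewrite unitmxE unitfE; apply/negP => /det0P[v v_neq0].
rewrite mulmxDr mulmx1 => /eqP; rewrite addr_eq0 => /eqP vE.
pose S := \sum_a `|v 0 a|.
have S_ge0 : 0 <= S by rewrite sumr_ge0.
have vS b : `|v 0 b| <= d * S.
  rewrite vE mxE normrN mxE (le_trans (ler_norm_sum _ _ _)) // /S mulr_sumr.
  by apply: ler_sum => a _; rewrite normrM mulrC ler_wpM2r.
have S_le : S <= n%:R * d * S.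
  apply: le_trans (_ : \sum_(b < n) d * S <= _); first exact: ler_sum.
  by rewrite sumr_const card_ord mulr_natl mulrnAl.
have : (1 - n%:R * d) * S <= 0 by rewrite mulrBl mul1r subr_le0.
rewrite pmulr_rle0 ?subr_gt0 // => S_le0.
have S0 : S = 0 by apply/eqP; rewrite eq_le S_le0 S_ge0.
move/negP: v_neq0; apply; apply/eqP/rowP => b; rewrite mxE.
by apply/eqP; rewrite -normr_eq0 (psumr_eq0P _ S0).
Qed.

Lemma unitmx_near (A : 'M[R]_n) : A \in unitmx ->
  exists2 d : R, 0 < d &
    forall B : 'M_n, (forall i j, `|B i j - A i j| < d) -> B \in unitmx.
Proof.
move=> A_unit; pose N := invmx A; pose b := \sum_i \sum_j `|N i j|.
have Nb i j : `|N i j| <= b.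
  have Nrow : `|N i j| <= \sum_j `|N i j|.
    exact: ler_sum_term (fun j => `|N i j|) j _.
  apply: le_trans Nrow _; rewrite /b.
  by apply: ler_sum_term (fun i => \sum_j `|N i j|) i _ => y; rewrite sumr_ge0.
have b_ge0 : 0 <= b by rewrite sumr_ge0 // => i _; rewrite sumr_ge0.
pose d := ((n.+1%:R) ^+ 2 * (b + 1))^-1.
have d_gt0 : 0 < d by rewrite invr_gt0 mulr_gt0 ?exprn_gt0 ?ltr0n ?ltr_wpDl.
exists d => // B Bnear.
have BN : B *m N = 1%:M + (B - A) *m N by rewrite mulmxBl mulmxV // addrC subrK.
have small : n%:R * (n%:R * (d * b)) < 1.
  rewrite mulrA (mulrC d) mulrA ltr_pdivrMr ?mulr_gt0 ?exprn_gt0 ?ltr0n ?ltr_wpDl // mul1r.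
  apply: le_lt_trans (_ : _ <= n.+1%:R ^+ 2 * b) _.
    by rewrite ler_wpM2r // expr2 -!natrM ler_nat leq_mul.
  by rewrite ltr_pM2l ?exprn_gt0 ?ltr0n // ltrDl ltr01.
have : B *m N \in unitmx.
  rewrite BN; apply: (unitmx_1D _ small) => i j.
  rewrite mxE (le_trans (ler_norm_sum _ _ _)) //.
  apply: le_trans (_ : \sum_(k < n) d * b <= _); last by rewrite sumr_const card_ord mulr_natl.
  apply: ler_sum => k _; rewrite normrM ler_pM // ltW //.
  by rewrite !mxE; exact: Bnear.
by rewrite unitmx_mul => /andP[].
Qed.
End Perturbation.

Section Restriction.
Variables (C : numClosedFieldType) (I' I J K : finType) (f : I' -> I).

Definition restrict1 (V : tensor3 C I J K) : tensor3 C I' J K := fun i => V (f i).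

Lemma rank_le_restrict1 V s : rank_le V s -> rank_le (restrict1 V) s.
Proof. by case=> a [b [c Vabc]]; exists (fun l i => a l (f i)), b, c => i; apply: Vabc. Qed.

Lemma border_rank_le_restrict1 V s :
  border_rank_le V s -> border_rank_le (restrict1 V) s.
Proof.
case=> u [u_rank u_cvg]; exists (fun n => restrict1 (u n)); split.
  by move=> n; apply: rank_le_restrict1.
by move=> e /u_cvg[N uN]; exists N => n /uN un i; apply: un.
Qed.
End Restriction.

Section Koszul.
Variables (C : numClosedFieldType) (J K : finType).
Implicit Type V : tensor3 C 'I_3 J K.

(* The Koszul flattening B^* (x) A -> Lambda^2 A (x) C for A = C^3, with Lambda^2 A identified
   with A through the Levi-Civita symbol. *)
Definition koszul_coef V (x : 'I_3 * J) (y : 'I_3 * K) : C :=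
  \sum_(i < 3) V i x.2 y.2 * (levi i x.1 y.1)%:~R.

Definition koszul V : 'M[C]_(#|{: 'I_3 * J}|, #|{: 'I_3 * K}|) :=
  \matrix_(x, y) koszul_coef V (enum_val x) (enum_val y).

Let sum_delta (T : finType) (x : T) (F : T -> C) : \sum_y (y == x)%:R * F y = F x.
Proof. by rewrite (bigD1 x) //= eqxx mul1r big1 ?addr0 // => y /negbTE ->; rewrite mul0r. Qed.

Lemma koszul_simple_rank (a : 'I_3 -> C) (b : J -> C) (c : K -> C) :
  (\rank (koszul (simple_tensor a b c)) <= 2)%N.
Proof.
pose M : 'M[C]_3 := \matrix_(p, q) \sum_(i < 3) a i * (levi i p q)%:~R.
pose Mb : 'M[C]_(#|{: 'I_3 * J}|, 3) :=
  \matrix_(x, p) ((p == (enum_val x).1)%:R * b (enum_val x).2).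
pose Mc : 'M[C]_(3, #|{: 'I_3 * K}|) :=
  \matrix_(q, y) ((q == (enum_val y).1)%:R * c (enum_val y).2).
have MbM x q : (Mb *m M) x q = b (enum_val x).2 * M (enum_val x).1 q.
  by rewrite mxE; under eq_bigr do rewrite mxE -mulrA; rewrite sum_delta.
have -> : koszul (simple_tensor a b c) = Mb *m M *m Mc.
  apply/matrixP => x y; rewrite !mxE.
  under [RHS]eq_bigr => q _ do rewrite MbM [Mc _ _]mxE mulrC -mulrA.
  rewrite sum_delta mxE /koszul_coef !mulr_sumr; apply: eq_bigr => i _.
  by rewrite /simple_tensor; ring.
apply: leq_trans (mxrankM_maxl _ _) _; apply: leq_trans (mxrankM_maxr _ _) _.
rewrite -ltnS; apply: skew_mxrank_lt; rewrite ?pnatr_eq0 //.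
apply/matrixP => p q; rewrite !mxE -sumrN; apply: eq_bigr => i _.
by rewrite levi_swap23 mulrNz mulrN.
Qed.

Lemma koszul_rank_le V s : rank_le V s -> (\rank (koszul V) <= 2 * s)%N.
Proof.
case=> a [b [c V_sum]].
have -> : koszul V = (\sum_(l < s) koszul (simple_tensor (a l) (b l) (c l)))%R.
  apply/matrixP => x y; rewrite summxE !mxE /koszul_coef.
  under eq_bigr => i _ do rewrite V_sum mulr_suml.
  by rewrite exchange_big; apply: eq_bigr => l _; rewrite mxE.
apply: leq_trans (mxrank_sum_le _) _.
apply: (@leq_trans (\sum_(l < s) 2)).
  by apply: leq_sum => l _; apply: koszul_simple_rank.
by rewrite sum_nat_const card_ord mulnC.
Qed.

Lemma koszul_near V V' (d : C) : (forall i j k, `|V i j k - V' i j k| < d) ->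
  forall x y, `|koszul V x y - koszul V' x y| < 3%:R * d.
Proof.
move=> VV' x y; rewrite !mxE -sumrB (le_lt_trans (ler_norm_sum _ _ _)) //.
apply: (@lt_le_trans _ _ (\sum_(i < 3) d)); last by rewrite sumr_const card_ord mulr_natl.
apply: ltr_sum => [|i _]; first by apply/hasP; exists ord0; rewrite ?mem_index_enum.
rewrite -mulrBl normrM; apply: le_lt_trans (VV' i (enum_val x).2 (enum_val y).2).
by rewrite -[leRHS]mulr1 ler_wpM2l ?levi_norm_le1.
Qed.
End Koszul.

Lemma koszul_border_rank_ge (C : numClosedFieldType) (J : finType)
    (T : tensor3 C 'I_3 J J) s :
  koszul T \in unitmx -> border_rank_le T s -> (#|{: 'I_3 * J}| <= 2 * s)%N.
Proof.
case/unitmx_near=> d d_gt0 near_unit [u [u_rank u_cvg]].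
have [N uN] := u_cvg (d / 3%:R) (divr_gt0 d_gt0 (ltr0n _ 3)).
have /mxrank_unit <- : koszul (u N) \in unitmx.
  have three_neq0 : 3%:R != 0 :> C by rewrite pnatr_eq0.
  apply: near_unit => x y; rewrite -[d](divfK three_neq0) mulrC.
  exact: koszul_near (uN N (leqnn N)) x y.
exact: koszul_rank_le.
Qed.

Lemma border_rank_le_of_approx (C : numClosedFieldType) (I J K : finType)
    (T : tensor3 C I J K) s (f : C -> tensor3 C I J K) (M : C) :
    (forall e : C, 0 < e -> exists n, n.+1%:R^-1 < e) -> 0 <= M ->
    (forall t, 0 < t -> rank_le (f t) s) ->
    (forall t, 0 < t <= 1 -> forall i j k, `|f t i j k - T i j k| <= t * M) ->
  border_rank_le T s.
Proof.
move=> archi M_ge0 f_rank f_err; pose t n : C := n.+1%:R^-1.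
have t_gt0 n : 0 < t n by rewrite invr_gt0 ltr0n.
exists (fun n => f (t n)); split => [n|e e_gt0]; first exact: f_rank.
have M1_gt0 : 0 < M + 1 by rewrite ltr_wpDl.
have [N tN] := archi _ (divr_gt0 e_gt0 M1_gt0).
exists N => n Nn i j k.
have tn_le : t n <= t N by rewrite lef_pV2 ?posrE ?ltr0n // ler_nat.
apply: le_lt_trans (f_err _ _ i j k) _; first by rewrite t_gt0 invf_le1 ?ltr0n // ler1n.
apply: le_lt_trans (_ : t N * (M + 1) < e); last by rewrite -ltr_pdivlMr.
by rewrite ler_pM ?lerDl ?ler01 // ltW.
Qed.

Section TangentDegeneration.
Variables (C : numClosedFieldType) (I J K : finType) (T : tensor3 C I J K) (s : nat).
Variables (lam : 'I_s -> C) (a : 'I_s -> I -> C) (b : 'I_s -> J -> C) (c : 'I_s -> K -> C).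

Let moment m i j k := \sum_(l < s) lam l ^+ m * simple_tensor (a l) (b l) (c l) i j k.

Hypothesis moment0 : forall i j k, \sum_(l < s) simple_tensor (a l) (b l) (c l) i j k = 0.
Hypothesis moment1 :
  forall i j k, \sum_(l < s) lam l * simple_tensor (a l) (b l) (c l) i j k = T i j k.

Definition tangent_approx (t : C) :
    tensor3 C (I * 'I_2)%type (J * 'I_2)%type (K * 'I_2)%type :=
  fun x y z => \sum_(l < s) simple_tensor
    (fun u : I * 'I_2 => t^-1 * a l u.1 * (t * lam l) ^+ u.2)
    (fun v : J * 'I_2 => b l v.1 * (t * lam l) ^+ v.2)
    (fun w : K * 'I_2 => c l w.1 * (t * lam l) ^+ w.2) x y z.

Lemma tangent_approx_rank t : rank_le (tangent_approx t) s.
Proof. by do 3!eexists. Qed.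

Lemma tangent_approxE t x y z : t != 0 ->
  tangent_approx t x y z =
  t ^+ (x.2 + y.2 + z.2) / t * moment (x.2 + y.2 + z.2) x.1 y.1 z.1.
Proof.
move=> t_neq0; rewrite /moment mulr_sumr; apply: eq_bigr => l _.
by rewrite /simple_tensor !exprMn !exprD; field.
Qed.

Lemma tangent_approx_error : exists2 M : C, 0 <= M & forall t, 0 < t <= 1 ->
  forall x y z, `|tangent_approx t x y z - kron T (W_tensor C) x y z| <= t * M.
Proof.
pose F (v : (I * J * K)%type) := `|moment 2 v.1.1 v.1.2 v.2| + `|moment 3 v.1.1 v.1.2 v.2|.
pose M := \sum_v F v.
have F_ge0 v : 0 <= F v by rewrite addr_ge0.
have M_ge0 : 0 <= M by exact: sumr_ge0.
have moments23_le i j k : `|moment 2 i j k| + `|moment 3 i j k| <= M.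
  exact: (@ler_sum_term C _ F (i, j, k)).
exists M => // t /andP[t_gt0 t_le1] [i e1] [j e2] [k e3].
have t_neq0 : t != 0 by rewrite gt_eqF.
rewrite tangent_approxE // /kron W_tensorE /=.
have : (e1 + e2 + e3 <= 3)%N by rewrite -[3%N]/(1 + 1 + 1)%N !leq_add // -ltnS.
case: (e1 + e2 + e3)%N => [|[|[|[|//]]]] _.
- rewrite /moment; under eq_bigr do rewrite expr0 mul1r.
  by rewrite moment0 !mulr0 subr0 normr0 mulr_ge0 // ltW.
- rewrite /moment; under eq_bigr do rewrite expr1.
  by rewrite moment1 divff // mul1r mulr1 subrr normr0 mulr_ge0 // ltW.
- rewrite mulr0 subr0 expr2 mulfK // normrM gtr0_norm //.
  apply: ler_wpM2l; first exact: ltW.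
  by apply: le_trans (moments23_le i j k); rewrite lerDl.
- rewrite mulr0 subr0 exprS expr2 mulrA mulfK // normrM gtr0_norm ?mulr_gt0 //.
  apply: le_trans (_ : t * `|moment 3 i j k| <= _); last first.
    apply: ler_wpM2l; first exact: ltW.
    by apply: le_trans (moments23_le i j k); rewrite lerDr.
  by rewrite -mulrA ler_piMl ?mulr_ge0 // ltW.
Qed.

Lemma kron_W_border_rank_le : (forall e : C, 0 < e -> exists n, n.+1%:R^-1 < e) ->
  border_rank_le (kron T (W_tensor C)) s.
Proof.
move=> archi; have [M M_ge0 approx_error] := tangent_approx_error.
exact: border_rank_le_of_approx archi M_ge0 (fun t _ => tangent_approx_rank t) approx_error.
Qed.
End TangentDegeneration.

Definition skew_lam : seq int := [:: 1; 1; 1; 1; -1; 0; 0; 0; 0].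
Definition skew_a : seq (seq int) :=
  [:: [:: -4; 4; -4]; [:: 0; -4; 0]; [:: 0; 0; 4]; [:: 0; 4; -4]; [:: -4; 0; 0];
      [:: -1; -1; -1]; [:: 1; 1; -1]; [:: 1; -1; 1]; [:: -1; 1; 1]].
Definition skew_b : seq (seq int) :=
  [:: [:: 0; 0; 1]; [:: 1; 0; 0]; [:: 1; -1; 1]; [:: 1; 0; 1]; [:: 0; 1; 0];
      [:: 1; 1; -1]; [:: 1; 1; 1]; [:: 1; -1; -1]; [:: -1; 1; -1]].
Definition skew_c : seq (seq int) :=
  [:: [:: 0; 1; 0]; [:: 1; -1; 1]; [:: 1; 0; 0]; [:: 1; -1; 0]; [:: 0; 0; 1];
      [:: -1; 1; -1]; [:: -1; 1; 1]; [:: -1; -1; -1]; [:: 1; 1; -1]].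

Definition witness_entry (w : seq (seq int)) (l : 'I_9) (i : 'I_3) : int := nth 0 (nth [::] w l) i.

Lemma skew_moment0_int (i j k : 'I_3) :
  \sum_(l < 9) witness_entry skew_a l i * witness_entry skew_b l j * witness_entry skew_c l k = 0.
Proof.
by case: i j k => [[|[|[|//]]] ?] [[|[|[|//]]] ?] [[|[|[|//]]] ?];
  rewrite !big_ord_recr big_ord0.
Qed.

Lemma skew_moment1_int (i j k : 'I_3) :
  \sum_(l < 9) nth 0 skew_lam l *
    (witness_entry skew_a l i * witness_entry skew_b l j * witness_entry skew_c l k) =
  4 * levi i j k.
Proof.
by case: i j k => [[|[|[|//]]] ?] [[|[|[|//]]] ?] [[|[|[|//]]] ?];
  rewrite !big_ord_recr big_ord0.
Qed.

Section SkewWitness.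
Variable C : numClosedFieldType.

(* The factor 4 of the first moment is absorbed into [lam]. *)
Let lam (l : 'I_9) : C := (nth 0 skew_lam l)%:~R / 4.
Let a l i : C := (witness_entry skew_a l i)%:~R.
Let b l j : C := (witness_entry skew_b l j)%:~R.
Let c l k : C := (witness_entry skew_c l k)%:~R.

Lemma skew_moment0 i j k : \sum_(l < 9) simple_tensor (a l) (b l) (c l) i j k = 0.
Proof.
rewrite /simple_tensor; under eq_bigr do rewrite -!rmorphM.
by rewrite -(rmorph_sum (intr : {rmorphism int -> C})) skew_moment0_int.
Qed.

Lemma skew_moment1 i j k :
  \sum_(l < 9) lam l * simple_tensor (a l) (b l) (c l) i j k = T_skewcw2 C i j k.
Proof.
rewrite /simple_tensor /lam; under eq_bigr do rewrite mulrAC -!rmorphM.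
rewrite -mulr_suml -(rmorph_sum (intr : {rmorphism int -> C})) skew_moment1_int.
by rewrite T_skewcw2E rmorphM mulrAC divff ?mul1r // intr_eq0.
Qed.
End SkewWitness.

Section SkewWKoszul.
Variable C : numClosedFieldType.
Local Notation J := ('I_3 * 'I_2)%type.

Definition skewW_slice : tensor3 C 'I_3 J J :=
  restrict1 (fun i => (i, ord0)) (kron (T_skewcw2 C) (W_tensor C)).

Let pairing (e f : 'I_2) : int := (e + f == 1)%N%:R.

Let kappa (p j q k : 'I_3) : int := ((j == p) && (k == q))%:R - ((j == q) && (k == p))%:R.
Let nu (q k r m : 'I_3) : int := ((q == k) && (r == m))%:R - 2 * ((q == m) && (k == r))%:R.

Lemma koszul_coef_skewW_slice (x y : 'I_3 * J) :
  koszul_coef skewW_slice x y = (kappa x.1 x.2.1 y.1 y.2.1 * pairing x.2.2 y.2.2)%:~R.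
Proof.
rewrite /koszul_coef /skewW_slice /restrict1 /kron /=.
under eq_bigr do rewrite T_skewcw2E W_tensorE add0n.
rewrite /kappa -levi_contract /pairing rmorphM rmorph_sum mulr_suml /=.
apply: eq_bigr => i _.
by rewrite !rmorphM /=; ring.
Qed.

Let sum_pairing (e f : 'I_2) : \sum_(g < 2) pairing e g * pairing g f = (e == f)%:R.
Proof. by case: e f => [[|[|//]] ?] [[|[|//]] ?]; rewrite !big_ord_recr big_ord0. Qed.

Let sum_kappa_nu (p j r m : 'I_3) :
  \sum_(q < 3) \sum_(k < 3) kappa p j q k * nu q k r m = 2 * ((p == r) && (j == m))%:R.
Proof.
by case: p j r m => [[|[|[|//]]] ?] [[|[|[|//]]] ?] [[|[|[|//]]] ?] [[|[|[|//]]] ?];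
  rewrite !big_ord_recr !big_ord0.
Qed.

Let sum_kappa_nu_pairing (x y : 'I_3 * J) :
  \sum_(z : 'I_3 * J) kappa x.1 x.2.1 z.1 z.2.1 * pairing x.2.2 z.2.2 *
                       (nu z.1 z.2.1 y.1 y.2.1 * pairing z.2.2 y.2.2) = 2 * (x == y)%:R.
Proof.
case: x y => [p [j e]] [r [m f]] /=.
rewrite (sum_prod3 (fun q k g => kappa p j q k * pairing e g * (nu q k r m * pairing g f))).
under eq_bigr do under eq_bigr do
  rewrite (eq_bigr _ (fun g _ => mulrACA _ _ _ _)) -mulr_sumr sum_pairing.
under eq_bigr do rewrite -mulr_suml.
by rewrite -mulr_suml sum_kappa_nu !xpair_eqE -mulrA -natrM mulnb andbA.
Qed.

Lemma koszul_skewW_slice_unit : koszul skewW_slice \in unitmx.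
Proof.
(* The flattening is (D - S) (x) P, where D = u u^T for u = sum_p e_p (x) e_p, S swaps the two
   C^3 factors and P is the antidiagonal 2 x 2 matrix; as D^2 = 3 D, D S = S D = D and
   S^2 = P^2 = 1, its inverse is (D - 2 S) (x) P / 2. *)
pose N : 'M[C]_#|{: 'I_3 * J}| := \matrix_(x, y)
  ((nu (enum_val x).1 (enum_val x).2.1 (enum_val y).1 (enum_val y).2.1 *
    pairing (enum_val x).2.2 (enum_val y).2.2)%:~R / 2).
suff /mulmx1_unit[] : koszul skewW_slice *m N = 1%:M by [].
apply/matrixP => x y; rewrite !mxE.
under eq_bigr do rewrite !mxE koszul_coef_skewW_slice mulrA -intrM.
rewrite -mulr_suml -(rmorph_sum (intr : {rmorphism int -> C})).
rewrite -(big_enum_val (fun z =>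
  kappa (enum_val x).1 (enum_val x).2.1 z.1 z.2.1 * pairing (enum_val x).2.2 z.2.2 *
  (nu z.1 z.2.1 (enum_val y).1 (enum_val y).2.1 * pairing z.2.2 (enum_val y).2.2))).
rewrite sum_kappa_nu_pairing (inj_eq enum_val_inj) rmorphM /= mulrAC divff ?intr_eq0 //.
by rewrite mul1r mulrz_nat.
Qed.
End SkewWKoszul.

Local Open Scope complex_scope.

Lemma complex_archimedean (R : realType) (e : R[i]) : 0 < e -> exists n, n.+1%:R^-1 < e.
Proof.
case: e => x y; rewrite ltcE /= => /andP[/eqP -> x_gt0]; rewrite complexr0.
exists (Num.bound x^-1).
rewrite -(rmorph_nat (real_complex R)) -fmorphV ltcR -[X in _ < X]invrK.
rewrite ltf_pV2 ?posrE ?ltr0n ?invr_gt0 //.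
apply: lt_le_trans (archi_boundP _) _; first by rewrite invr_ge0 ltW.
by rewrite ler_nat.
Qed.

Theorem mainTheorem3 (R : realType) :
  has_border_rank (kron (T_skewcw2 R[i]) (W_tensor R[i])) 9.
Proof.
split.
  exact: kron_W_border_rank_le (skew_moment0 _) (skew_moment1 _)
    (@complex_archimedean R).
move=> s /(border_rank_le_restrict1 (fun i : 'I_3 => (i, ord0))).
move/(koszul_border_rank_ge (koszul_skewW_slice_unit _)).
by rewrite !card_prod !card_ord; lia.
Qed.
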